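(* (Dual SDP upper bound for the $\ell_\infty$-FGL of multi-layer networks.) Let $d\ge2$, let $n_1,\dots,n_d\ge1$, let $W_i\in\mathbb{R}^{n_{i+1}\times n_i}$ for $i\in[d-1]$, let $u\in\mathbb{R}^{1\times n_d}$, and let $a\le b$ be real. Let $\zeta\in\mathbb{R}$ and $\Lambda_i\in\mathbb{R}^{n_i}_+$ for $i\in[d]$, and put $T_i=\mathrm{diag}(\Lambda_i)$. Let $M$ be the symmetric block matrix with block rows/columns indexed by $0,1,\dots,d$ of sizes $1,n_1,\dots,n_d$, whose nonzero blocks are: - $M_{00}=\sum_{k=1}^{n_1}(\Lambda_1)_k-\zeta$, $M_{0d}=u$, $M_{d0}=u^T$; - $M_{11}=-T_1-2ab\,W_1^TT_2W_1$; - $M_{ii}=-2T_i-2ab\,W_i^TT_{i+1}W_i$ for $2\le i\le d-1$; - $M_{dd}=-2T_d$; - $M_{i,i+1}=(a+b)W_i^TT_{i+1}$ and $M_{i+1,i}=(a+b)T_{i+1}W_i$ for $1\le i\le d-1$ (when $d=2$, the blocks $M_{0d}$ and $M_{d0}$ are added to the listed ones; all other blocks are zero). If $M\preceq0$, then $$\frac{\zeta}{2}\;\ge\;\max_{v_i\in[a,b]^{n_{i+1}},\ i\in[d-1]}\big\|W_1^T\mathrm{diag}(v_1)W_2^T\mathrm{diag}(v_2)\cdots W_{d-1}^T\mathrm{diag}(v_{d-1})u^T\big\|_1 .$$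
   Context: $\mathrm{diag}(v)$ is the diagonal matrix with diagonal $v$; $P\preceq0$ means $-P$ is positive semidefinite; $\mathbb{R}_+=[0,\infty)$. The right-hand side is the $\ell_\infty$ formal global Lipschitz constant of the network $x\mapsto u\,\sigma(W_{d-1}\cdots\sigma(W_1x))$ whose activation $\sigma$ has derivative in $[a,b]$ (for ReLU, $a=0,b=1$): the maximum $\ell_1$-norm of the formal gradient when every activation derivative is treated as an independent value in $[a,b]$. *)

From mathcomp Require Import all_boot all_order all_algebra.
Set Implicit Arguments. Unset Strict Implicit. Unset Printing Implicit Defensive.
Import Order.TTheory GRing.Theory Num.Theory.
Local Open Scope ring_scope.

Section FGL.
Variable R : realFieldType.

Definition mxget m n (A : 'M[R]_(m, n)) (r c : nat) : R :=
  match (insub r : option 'I_m), (insub c : option 'I_n) with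
  | Some i, Some j => A i j
  | _, _ => 0
  end.

Variables (d : nat) (n : nat -> nat)
  (W : forall i : nat, 'M[R]_(n i.+1, n i))   (* W i : n_{i+1} x n_i, used for 1 <= i <= d-1 *)
  (u : 'rV[R]_(n d)) (a b zeta : R)
  (Lam : forall i : nat, 'rV[R]_(n i)).       (* Lam i = Lambda_i, used for 1 <= i <= d *)

Definition T (i : nat) : 'M[R]_(n i) := diag_mx (Lam i).

Definition bsize (k : 'I_d.+1) : nat := if val k == 0%N then 1%N else n k.

Definition blk (i j r c : nat) : R :=
  if (i == 0%N) && (j == 0%N) then (\sum_(k < n 1) Lam 1 0 k) - zeta
  else if (i == 0%N) && (j == d) then mxget u r c
  else if (i == d) && (j == 0%N) then mxget u^T r c
  else if i == j then
    (if i == 1%N then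
       mxget (- T 1 - (2 * a * b) *: ((W 1)^T *m T 2 *m W 1)) r c
     else if i == d then mxget (- (2%:R *: T d)) r c
     else mxget (- (2%:R *: T i) - (2 * a * b) *: ((W i)^T *m T i.+1 *m W i)) r c)
  else if (j == i.+1) && (1 <= i)%N then
    mxget ((a + b) *: ((W i)^T *m T i.+1)) r c
  else if (i == j.+1) && (1 <= j)%N then
    mxget ((a + b) *: (T j.+1 *m W j)) r c
  else 0.

Definition Mblock (i j : 'I_d.+1) : 'M[R]_(bsize i, bsize j) :=
  \matrix_(r < bsize i, c < bsize j) blk i j r c.

Definition Mdual : 'M[R]_(\sum_i bsize i) := \mxblock_(i, j) Mblock i j.

End FGL.

Definition nsd (R : realFieldType) (N : nat) (P : 'M[R]_N) : Prop :=
  forall x : 'cV[R]_N, ((x^T *m P *m x) 0 0) <= 0.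

Fixpoint chain (R : realFieldType) (n : nat -> nat)
  (W : forall i : nat, 'M[R]_(n i.+1, n i))
  (v : forall i : nat, 'rV[R]_(n i.+1)) (k : nat) : 'M[R]_(n 1%N, n k.+1) :=
  match k return 'M[R]_(n 1%N, n k.+1) with
  | 0%N => 1%:M
  | k'.+1 => chain W v k' *m (W k'.+1)^T *m diag_mx (v k'.+1)
  end.

Definition l1norm (R : realFieldType) (m : nat) (x : 'cV[R]_m) : R :=
  \sum_(k < m) `|x k 0|.

From mathcomp Require Import all_boot all_order all_algebra zify ring lra.
Set Implicit Arguments. Unset Strict Implicit. Unset Printing Implicit Defensive.
Import Order.TTheory GRing.Theory Num.Theory.
Local Open Scope ring_scope.

(* Weak duality with an explicit test point.  Fix slopes v_i in [a, b], let
   g = W_1^T diag(v_1) ... W_{d-1}^T diag(v_{d-1}) u^T and let s be the sign vector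
   of g, so that s^T g = ||g||_1.  With y_1 = s and y_{i+1} = diag(v_i) W_i y_i we
   have u y_d = s^T g.  Since M is block tridiagonal apart from its corner blocks,
   its quadratic form at x = (1, y_1, ..., y_d) collapses to
     (sum_k (Lambda_1)_k - y_1^T T_1 y_1) - zeta + 2 u y_d
       + 2 sum_i sum_k (Lambda_{i+1})_k ((W_i y_i)_k)^2 ((v_i)_k - a) (b - (v_i)_k).
   The bracket vanishes because s has entries +-1, and the last sum is nonnegative,
   so x^T M x <= 0 yields 2 ||g||_1 <= zeta. *)

Section Bilinear.
Variable R : comNzRingType.

Definition bilin p q (x : 'cV[R]_p) (A : 'M[R]_(p, q)) (z : 'cV[R]_q) : R :=
  (x^T *m A *m z) 0 0.

Lemma bilinE p q (x : 'cV[R]_p) (A : 'M[R]_(p, q)) (z : 'cV[R]_q) :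
  bilin x A z = \sum_(r < p) \sum_(c < q) x r 0 * A r c * z c 0.
Proof.
rewrite /bilin mxE; under eq_bigr do rewrite mxE big_distrl.
rewrite exchange_big /=; apply: eq_bigr => r _; apply: eq_bigr => c _.
by rewrite !mxE.
Qed.

Lemma bilin_diagE m (x z : 'cV[R]_m) (L : 'rV[R]_m) :
  bilin x (diag_mx L) z = \sum_(k < m) x k 0 * L 0 k * z k 0.
Proof.
rewrite bilinE; apply: eq_bigr => r _.
rewrite (bigD1 r) //= big1 ?addr0; first by rewrite !mxE eqxx mulr1n.
by move=> c /negPf neq_cr; rewrite !mxE eq_sym neq_cr mulr0n mulr0 mul0r.
Qed.

Lemma bilinB p q (x : 'cV[R]_p) (A B : 'M[R]_(p, q)) (z : 'cV[R]_q) :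
  bilin x (A - B) z = bilin x A z - bilin x B z.
Proof. by rewrite /bilin mulmxBr mulmxBl !mxE. Qed.

Lemma bilinN p q (x : 'cV[R]_p) (A : 'M[R]_(p, q)) (z : 'cV[R]_q) :
  bilin x (- A) z = - bilin x A z.
Proof. by rewrite /bilin mulmxN mulNmx !mxE. Qed.

Lemma bilinZ p q (x : 'cV[R]_p) (c : R) (A : 'M[R]_(p, q)) (z : 'cV[R]_q) :
  bilin x (c *: A) z = c * bilin x A z.
Proof. by rewrite /bilin -scalemxAr -scalemxAl mxE. Qed.

Lemma bilin_mulmxl p q k (x : 'cV[R]_p) (A : 'M[R]_(k, p)) (B : 'M[R]_(k, q))
    (z : 'cV[R]_q) :
  bilin x (A^T *m B) z = bilin (A *m x) B z.
Proof. by rewrite /bilin trmx_mul !mulmxA. Qed.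

Lemma bilin_mulmxr p q k (x : 'cV[R]_p) (B : 'M[R]_(p, k)) (C : 'M[R]_(k, q))
    (z : 'cV[R]_q) :
  bilin x (B *m C) z = bilin x B (C *m z).
Proof. by rewrite /bilin !mulmxA. Qed.

Lemma bilin_tr p q (x : 'cV[R]_p) (A : 'M[R]_(p, q)) (z : 'cV[R]_q) :
  bilin x A z = bilin z A^T x.
Proof.
rewrite /bilin; have -> : z^T *m A^T *m x = (x^T *m A *m z)^T.
  by rewrite !trmx_mul trmxK mulmxA.
by rewrite [RHS]mxE.
Qed.

End Bilinear.

Lemma sector_bilin_ge0 (R : realFieldType) m (a b : R) (L w : 'rV[R]_m) (z : 'cV[R]_m) :
  (forall k, 0 <= L 0 k) -> (forall k, a <= w 0 k <= b) ->
  0 <= (a + b) * bilin z (diag_mx L) (diag_mx w *m z)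
       - bilin (diag_mx w *m z) (diag_mx L) (diag_mx w *m z)
       - a * b * bilin z (diag_mx L) z.
Proof.
move=> L_ge0 w_ab.
rewrite !bilin_diagE !mulr_sumr -!sumrB; apply: sumr_ge0 => k _.
rewrite mul_diag_mx mxE.
have /andP[aw wb] := w_ab k.
have Lz2_ge0 : 0 <= L 0 k * z k 0 ^+ 2 by rewrite mulr_ge0 ?sqr_ge0 ?L_ge0.
have sector_ge0 : 0 <= (w 0 k - a) * (b - w 0 k) by rewrite mulr_ge0 ?subr_ge0.
nra.
Qed.

Section SignVector.
Variable R : realFieldType.

Definition sign_col m (x : 'cV[R]_m) : 'cV[R]_m := \col_k (-1) ^+ (x k 0 < 0)%R.

Lemma sign_col_sqr m (x : 'cV[R]_m) k : sign_col x k 0 ^+ 2 = 1.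
Proof. by rewrite mxE sqrr_sign. Qed.

Lemma mul_tr_sign_col m (x : 'cV[R]_m) : (x^T *m sign_col x) 0 0 = l1norm x.
Proof.
rewrite mxE /l1norm; apply: eq_bigr => k _.
by rewrite !mxE normrEsign mulrC.
Qed.

End SignVector.

Lemma mxget_ord (R : realFieldType) m n (A : 'M[R]_(m, n)) (r : 'I_m) (c : 'I_n) :
  mxget A r c = A r c.
Proof. by rewrite /mxget !valK. Qed.

Lemma mxget_col (R : realFieldType) m (x : 'cV[R]_m) (r : 'I_m) : mxget x r 0 = x r 0.
Proof.
rewrite /mxget valK; case: insubP => [i _ ei|] //=.
by congr (x r _); apply: val_inj; rewrite ei.
Qed.

Lemma mxget_row (R : realFieldType) m (x : 'rV[R]_m) (c : 'I_m) : mxget x 0 c = x 0 c.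
Proof.
rewrite /mxget valK; case: insubP => [i _ ei|] //=.
by congr (x _ c); apply: val_inj; rewrite ei.
Qed.

Lemma big_nat_window (V : nmodType) (P : pred nat) (F : nat -> V) m M N :
  (M <= N)%N -> (forall i, (i < N)%N -> P i = (m <= i < M)%N) ->
  \sum_(0 <= i < N | P i) F i = \sum_(m <= i < M) F i.
Proof.
move=> le_MN P_window.
rewrite [RHS](big_nat_widenl _ 0) // [RHS](big_nat_widen _ _ N) //.
by apply: congr_big_nat => // i /= lt_iN; rewrite P_window // andbC.
Qed.

Section BandSum.
Variables (V : nmodType) (d : nat) (B : nat -> nat -> V).

Definition in_band (i j : nat) : bool :=
  [|| (i == 0%N) && ((j == 0%N) || (j == d)), (i == d) && (j == 0%N),
      (0 < i)%N && (j == i), (0 < i)%N && (j == i.+1) | (1 < i)%N && (j == i.-1)].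

Hypotheses (d_gt0 : (0 < d)%N) (B_band : forall i j, ~~ in_band i j -> B i j = 0).

Lemma band_split i j : B i j =
    (if (i == 0%N) && (j == 0%N) then B 0 0 else 0)
  + (if (i == 0%N) && (j == d) then B 0 d else 0)
  + (if (i == d) && (j == 0%N) then B d 0 else 0)
  + (if (0 < i)%N && (j == i) then B i i else 0)
  + (if (0 < i)%N && (j == i.+1) then B i i.+1 else 0)
  + (if (1 < i)%N && (j == i.-1) then B i i.-1 else 0).
Proof.
have [hb|hb] := boolP (in_band i j); last first.
  by rewrite B_band // !ifF ?addr0 //; move: hb; rewrite /in_band; lia.
case/orP: hb => [/andP[/eqP-> /orP[]/eqP->]|/or4P[]/andP[hi /eqP->]].
all: try move/eqP: hi => hi; try subst i.
all: by repeat case: ifP => ?; rewrite ?addr0 ?add0r //; lia.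
Qed.

Lemma sum_band : \sum_(0 <= i < d.+1) \sum_(0 <= j < d.+1) B i j =
  B 0 0 + B 0 d + B d 0 + \sum_(1 <= i < d.+1) B i i
  + \sum_(1 <= i < d) B i i.+1 + \sum_(2 <= i < d.+1) B i i.-1.
Proof.
under eq_bigr => i _ do
  rewrite (eq_bigr _ (fun j _ => band_split i j)) !big_split /= -!big_mkcond !big_nat1_cond_eq.
rewrite !big_split /= -!big_mkcond !big_nat1_cond_eq !big_nat1_eq /= ltnSn.
by rewrite (@big_nat_window _ _ _ 1 d.+1 _) 1?(@big_nat_window _ _ _ 1 d _)
  1?(@big_nat_window _ _ _ 2 d.+1 _) // => *; lia.
Qed.
End BandSum.

Section TestVector.
Variables (R : realFieldType) (d' : nat) (n : nat -> nat)
  (W : forall i : nat, 'M[R]_(n i.+1, n i)) (u : 'rV[R]_(n d'.+2))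
  (a b zeta : R) (Lam : forall i : nat, 'rV[R]_(n i))
  (v : forall i : nat, 'rV[R]_(n i.+1)) (s : 'cV[R]_(n 1%N)).
Local Notation d := d'.+2.
Local Notation blkM := (blk W u a b zeta Lam).
Local Notation T := (T Lam).

(* [layer k] is y_k (with [layer 1 = s]) and [test_entry i r] is coordinate r of block i
   of the test point x = (1, y_1, ..., y_d); [layer 0] is a dummy. *)
Definition layer_step k : 'cV[R]_(n k) -> 'cV[R]_(n k.+1) :=
  match k return 'cV[R]_(n k) -> 'cV[R]_(n k.+1) with
  | 0%N => fun _ => s
  | k1.+1 => fun y => diag_mx (v k1.+1) *m (W k1.+1 *m y)
  end.

Fixpoint layer k : 'cV[R]_(n k) :=
  match k return 'cV[R]_(n k) with
  | 0%N => 0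
  | k1.+1 => layer_step (layer k1)
  end.
Arguments layer : simpl never.

Lemma layer_succ i : (0 < i)%N -> layer i.+1 = diag_mx (v i) *m (W i *m layer i).
Proof. by case: i. Qed.

Lemma layer_chain k : layer k.+1 = (chain W v k)^T *m s.
Proof.
elim: k => [|k IH]; first by rewrite /= trmx1 mul1mx.
by rewrite layer_succ // IH /= !trmx_mul tr_diag_mx trmxK !mulmxA.
Qed.

Definition nbsize (i : nat) : nat := if i == 0%N then 1%N else n i.

Definition test_entry (i r : nat) : R := if i == 0%N then 1 else mxget (layer i) r 0.

Definition test_vector : 'cV[R]_(\sum_(i < d.+1) bsize n i) :=
  \mxcol_i (\col_(r < bsize n i) test_entry i r).

Definition block_form (i j : nat) : R :=
  \sum_(0 <= r < nbsize i) \sum_(0 <= c < nbsize j) test_entry i r * blkM i j r c * test_entry j c.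

Lemma test_formE : bilin test_vector (Mdual W u a b zeta Lam) test_vector =
  \sum_(0 <= i < d.+1) \sum_(0 <= j < d.+1) block_form i j.
Proof.
rewrite /bilin /test_vector /Mdual tr_mxcol mul_mxrow_mxblock mul_mxrow_mxcol summxE.
under eq_bigr do rewrite mulmx_suml summxE.
rewrite exchange_big big_mkord; apply: eq_bigr => i _.
rewrite big_mkord; apply: eq_bigr => j _.
rewrite -[LHS]/(bilin _ _ _) bilinE /block_form big_mkord; apply: eq_bigr => r _.
by rewrite big_mkord; apply: eq_bigr => c _; rewrite !mxE.
Qed.

Lemma block_form_band i j : ~~ in_band d i j -> block_form i j = 0.
Proof.
rewrite /in_band => out_ij; rewrite /block_form big1 // => r _; rewrite big1 // => c _.
rewrite /blk; repeat case: ifP => ?; rewrite ?mulr0 ?mul0r //.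
all: lia.
Qed.

Lemma block_formE i j (A : 'M[R]_(n i, n j)) : (0 < i)%N -> (0 < j)%N ->
  (forall r c, blkM i j r c = mxget A r c) -> block_form i j = bilin (layer i) A (layer j).
Proof.
move=> i_gt0 j_gt0 blk_A; rewrite /block_form /nbsize /test_entry.
have [-> ->] : (i == 0%N) = false /\ (j == 0%N) = false by split; lia.
rewrite bilinE big_mkord; apply: eq_bigr => r _.
by rewrite big_mkord; apply: eq_bigr => c _; rewrite blk_A !mxget_col mxget_ord.
Qed.

Local Notation pre i := (W i *m layer i).

Lemma block_form00 : block_form 0 0 = \sum_(k < n 1%N) Lam 1 0 k - zeta.
Proof. by rewrite /block_form /nbsize /= !big_nat1 /test_entry /blk /= mul1r mulr1. Qed.

Lemma block_form0d : block_form 0 d = (u *m layer d) 0 0.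
Proof.
rewrite /block_form /nbsize /= big_nat1 mxE big_mkord; apply: eq_bigr => c _.
by rewrite /test_entry /blk /= eqxx mul1r mxget_row mxget_col.
Qed.

Lemma block_formd0 : block_form d 0 = (u *m layer d) 0 0.
Proof.
rewrite /block_form /nbsize /= mxE big_mkord; apply: eq_bigr => r _.
by rewrite big_nat1 /test_entry /blk /= !eqxx mulr1 !mxget_col /= [u^T _ _]mxE mulrC.
Qed.

Lemma block_form11 : block_form 1 1 =
  - bilin (layer 1) (T 1) (layer 1) - 2 * a * b * bilin (pre 1) (T 2) (pre 1).
Proof.
rewrite (@block_formE 1 1 (- T 1 - (2 * a * b) *: ((W 1)^T *m T 2 *m W 1))) //.
by rewrite bilinB bilinN bilinZ bilin_mulmxr bilin_mulmxl.
Qed.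

Lemma block_form_diag i : (1 < i < d)%N -> block_form i i =
  - (2 * bilin (layer i) (T i) (layer i)) - 2 * a * b * bilin (pre i) (T i.+1) (pre i).
Proof.
move=> i_mid.
rewrite (@block_formE i i (- (2 *: T i) - (2 * a * b) *: ((W i)^T *m T i.+1 *m W i))); first last.
- move=> r c; rewrite /blk eqxx.
  by have [-> -> ->] : [/\ (i == 0%N) = false, (i == 1%N) = false & (i == d) = false] by split; lia.
- by lia.
- by lia.
by rewrite bilinB bilinN !bilinZ bilin_mulmxr bilin_mulmxl.
Qed.

Lemma block_formdd : block_form d d = - (2 * bilin (layer d) (T d) (layer d)).
Proof.
rewrite (@block_formE d d (- (2 *: T d))) // ?bilinN ?bilinZ //.
by move=> r c; rewrite /blk /= !eqxx.
Qed.

Lemma block_form_super i : (0 < i < d)%N ->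
  block_form i i.+1 = (a + b) * bilin (pre i) (T i.+1) (layer i.+1).
Proof.
move=> i_mid.
rewrite (@block_formE i i.+1 ((a + b) *: ((W i)^T *m T i.+1))); first last.
- move=> r c; rewrite /blk eqxx.
  have [-> -> ->] : [/\ (i == 0%N) = false, (i == i.+1) = false & (0 < i)%N] by split; lia.
  by rewrite /= andbF.
- by [].
- by lia.
by rewrite bilinZ bilin_mulmxl.
Qed.

Lemma block_form_sub i : (0 < i < d)%N ->
  block_form i.+1 i = (a + b) * bilin (pre i) (T i.+1) (layer i.+1).
Proof.
move=> i_mid.
rewrite (@block_formE i.+1 i ((a + b) *: (T i.+1 *m W i))); first last.
- move=> r c; rewrite /blk eqxx.
  have [-> -> -> ->] : [/\ (i.+1 == 0%N) = false, (i.+1 == i) = false,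
    (i == i.+2) = false & (i.+1 == d) && (i == 0%N) = false] by split; lia.
  by have -> : (0 < i)%N by lia.
- by lia.
- by [].
by rewrite bilinZ bilin_mulmxr bilin_tr /T tr_diag_mx.
Qed.

Definition sector_gap i : R :=
  (a + b) * bilin (pre i) (T i.+1) (layer i.+1)
  - bilin (layer i.+1) (T i.+1) (layer i.+1) - a * b * bilin (pre i) (T i.+1) (pre i).

Lemma sector_gap_ge0 i : (0 < i)%N -> (forall k, 0 <= Lam i.+1 0 k) ->
  (forall k, a <= v i 0 k <= b) -> 0 <= sector_gap i.
Proof. by move=> i_gt0 Lam_ge0 v_ab; rewrite /sector_gap layer_succ // sector_bilin_ge0. Qed.

Lemma test_form_expand : bilin test_vector (Mdual W u a b zeta Lam) test_vector =
  (\sum_(k < n 1%N) Lam 1 0 k - bilin (layer 1) (T 1) (layer 1)) - zeta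
  + 2 * (u *m layer d) 0 0 + 2 * \sum_(1 <= i < d) sector_gap i.
Proof.
rewrite test_formE (sum_band _ block_form_band) // block_form00 block_form0d block_formd0.
rewrite big_ltn // block_form11 big_nat_recr // block_formdd.
rewrite (eq_big_nat _ _ block_form_diag) (eq_big_nat _ _ block_form_super).
rewrite [\sum_(2 <= i < d.+1) _]big_add1 /= (eq_big_nat _ _ block_form_sub).
have sum_yTy : \sum_(1 <= i < d) bilin (layer i.+1) (T i.+1) (layer i.+1)
    = \sum_(2 <= i < d) bilin (layer i) (T i) (layer i) + bilin (layer d) (T d) (layer d).
  by rewrite -big_nat_recr // big_add1.
have sum_zTz : \sum_(1 <= i < d) bilin (pre i) (T i.+1) (pre i)
    = bilin (pre 1) (T 2) (pre 1) + \sum_(2 <= i < d) bilin (pre i) (T i.+1) (pre i).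
  by rewrite big_ltn.
rewrite /sector_gap !big_split /= !sumrN -!mulr_sumr sum_yTy sum_zTz.
ring.
Qed.
End TestVector.

Theorem mainTheorem10 (R : realFieldType) (d' : nat) (n : nat -> nat)
  (hn : forall i : nat, (1 <= i <= d'.+2)%N -> (0 < n i)%N)
  (W : forall i : nat, 'M[R]_(n i.+1, n i)) (u : 'rV[R]_(n d'.+2))
  (a b : R) (hab : a <= b) (zeta : R) (Lam : forall i : nat, 'rV[R]_(n i))
  (hLam : forall i : nat, (1 <= i <= d'.+2)%N -> forall k, 0 <= Lam i 0 k)
  (hM : nsd (@Mdual R d'.+2 n W u a b zeta Lam)) :
  forall v : forall i : nat, 'rV[R]_(n i.+1),
    (forall i : nat, (1 <= i <= d'.+1)%N -> forall k, a <= v i 0 k <= b) ->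
    l1norm (chain W v d'.+1 *m u^T) <= zeta / 2.
Proof.
move=> v v_ab; set g := chain W v d'.+1 *m u^T.
have := hM (@test_vector R d' n W v (sign_col g)).
rewrite -[_ 0 0]/(bilin _ _ _) test_form_expand.
have -> : \sum_(k < n 1%N) Lam 1 0 k - bilin (layer W v (sign_col g) 1) (T Lam 1)
            (layer W v (sign_col g) 1) = 0.
  rewrite /T bilin_diagE -sumrB big1 // => k _.
  by rewrite mulrC mulrA -expr2 sign_col_sqr mul1r subrr.
have -> : (u *m layer W v (sign_col g) d'.+2) 0 0 = l1norm g.
  rewrite layer_chain -mul_tr_sign_col; move: (sign_col g) => s.
  by rewrite /g; move: (chain W v d'.+1) => C; rewrite trmx_mul trmxK mulmxA.
have : 0 <= \sum_(1 <= i < d'.+2) sector_gap W a b Lam v (sign_col g) i.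
  rewrite big_nat_cond; apply: sumr_ge0 => i /andP[i_mid _].
  by apply: sector_gap_ge0 => [||k]; [lia | apply: hLam; lia | apply: v_ab; lia].
lra.
Qed.
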